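(* Let $f\in C^1[0,1]$ with $f(0)=0$, $h:=f'$; let $D\in C^1[0,1]$ with $D>0$ on $(0,1)$, $D(1)=0$; let $g\in C[0,1]$ with $g>0$ on $(0,1]$, $g(0)=0$; assume $\limsup_{\varphi\to0^+}D(\varphi)g(\varphi)/\varphi<+\infty$. Set $q:=Dg$, let $c\ge c^*$ and let $z$ be the solution of $(P_c)$ with $z(1)=0$. Then $$\lim_{\varphi\to1^-}\frac{D(\varphi)}{z(\varphi)}=\begin{cases}\dfrac{h(1)-c-\sqrt{(h(1)-c)^2-4D'(1)g(1)}}{2g(1)} & \text{if } D'(1)<0,\\[2mm] \min\Big\{0,\dfrac{h(1)-c}{g(1)}\Big\} & \text{if } D'(1)=0.\end{cases}$$
   Context: For $c\in\mathbb R$, a solution of problem $(P_c)$ (with $q=Dg$) is a function $z\in C[0,1]\cap C^1(0,1)$ with $\dot z(\varphi)=h(\varphi)-c-q(\varphi)/z(\varphi)$ and $z(\varphi)<0$ for all $\varphi\in(0,1)$, and $z(0)=0$. $c^*$ denotes the real number such that $(P_c)$ has a solution with $z(1)=0$ iff $c\ge c^*$, this solution then being unique. *)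

From Stdlib Require Import Reals.
From Coquelicot Require Import Coquelicot.
Open Scope R_scope.

Definition I01 (x : R) : Prop := 0 <= x <= 1.

Definition cont01 (f : R -> R) : Prop :=
  forall x, I01 x -> filterlim f (within I01 (locally x)) (locally (f x)).

Definition has_deriv01 (f df : R -> R) : Prop :=
  forall x, I01 x ->
    filterlim (fun y => (f y - f x) / (y - x))
      (within (fun y => I01 y /\ y <> x) (locally x)) (locally (df x)).

Definition C1_01 (f df : R -> R) : Prop := has_deriv01 f df /\ cont01 df.

Definition solves_Pc (h D g : R -> R) (c : R) (z : R -> R) : Prop :=
  cont01 z /\
  (forall x, 0 < x < 1 -> is_derive z x (h x - c - (D x * g x) / z x)) /\
  (forall x, 0 < x < 1 -> z x < 0) /\
  z 0 = 0.

From Stdlib Require Import Reals Lra.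
From Coquelicot Require Import Coquelicot.
Open Scope R_scope.

(* Write [w = D / z] and [charP x t = g x t^2 - (h x - c) t + D'(x)].  For a
   constant [t < 0], the function [D - t z] has derivative
   [charP x t + g x t (w - t)], so wherever [D - t z >= 0] (that is [w <= t])
   its slope is at least [charP x t].  If [charP 1 t > 0], a barrier (maximum
   principle) argument on [[x1, 1]], using [D(1) = z(1) = 0], shows
   [D - t z < 0], i.e. [w > t], near [1]; symmetrically [charP 1 t < 0] gives
   [w < t].  Hence [w] tends to the point [T <= 0] where [charP 1] changes sign
   on the negative axis, which is the smaller root when [D'(1) < 0] and
   [min 0 ((h 1 - c) / g 1)] when [D'(1) = 0]. *)

Lemma cont01_plus (F G : R -> R) :
  cont01 F -> cont01 G -> cont01 (fun x => F x + G x).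
Proof.
  intros HF HG x Ix.
  apply (filterlim_comp_2 F G Rplus (HF x Ix) (HG x Ix)).
  exact (filterlim_plus (K := R_AbsRing) (V := R_NormedModule) (F x) (G x)).
Qed.

Lemma cont01_scal (k : R) (F : R -> R) : cont01 F -> cont01 (fun x => k * F x).
Proof.
  intros HF x Ix.
  eapply filterlim_comp; [exact (HF x Ix)|].
  exact (filterlim_scal_r (K := R_AbsRing) (V := R_NormedModule) k (F x)).
Qed.

Lemma cont01_const (k : R) : cont01 (fun _ => k).
Proof. intros x _. apply filterlim_const. Qed.

Lemma cont01_ext (F G : R -> R) : (forall x, F x = G x) -> cont01 F -> cont01 G.
Proof.
  intros E HF x Ix. rewrite <- E.
  exact (filterlim_ext F G E (HF x Ix)).
Qed.

Lemma at_left1_interval (P : R -> Prop) :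
  at_left 1 P -> exists a, 0 <= a < 1 /\ forall x, a < x < 1 -> P x.
Proof.
  intros [d Hd].
  exists (Rmax 0 (1 - d)). split.
  - pose proof (cond_pos d). unfold Rmax; destruct Rle_dec; lra.
  - intros x Hx. apply Hd; [|lra].
    change (Rabs (x - 1) < d). rewrite Rabs_left by lra.
    pose proof (Rmax_r 0 (1 - d)). lra.
Qed.

Lemma at_left1_open_unit : at_left 1 (fun x => 0 < x < 1).
Proof.
  exists (mkposreal 1 Rlt_0_1). intros x Hx Hlt.
  change (Rabs (x - 1) < 1) in Hx. rewrite Rabs_left in Hx by lra. lra.
Qed.

Lemma cont01_at_left1 (F : R -> R) :
  cont01 F -> filterlim F (at_left 1) (locally (F 1)).
Proof.
  intros HF. apply (filterlim_filter_le_1 F (F := within I01 (locally 1))).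
  - intros P HP. unfold within in HP. unfold at_left, within.
    generalize (filter_and _ _ HP at_left1_open_unit).
    apply filter_imp. intros x [HPx Hx] Hlt. apply HPx. specialize (Hx Hlt).
    unfold I01; lra.
  - apply HF. unfold I01; lra.
Qed.

Lemma cont01_eventually_pos (F : R -> R) :
  cont01 F -> 0 < F 1 -> at_left 1 (fun x => 0 < F x).
Proof.
  intros HF H1.
  generalize (proj1 (filterlim_locally _ _) (cont01_at_left1 F HF) (mkposreal _ H1)).
  apply filter_imp. intros x Hx.
  change (Rabs (F x - F 1) < F 1) in Hx. apply Rabs_def2 in Hx. lra.
Qed.

Lemma has_deriv01_interior (F dF : R -> R) (x : R) :
  has_deriv01 F dF -> 0 < x < 1 -> is_derive F x (dF x).
Proof.
  intros HF Hx. apply is_derive_Reals. intros eps Heps.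
  assert (Ix : I01 x) by (unfold I01; lra).
  destruct (proj1 (filterlim_locally _ _) (HF x Ix) (mkposreal eps Heps)) as [d Hd].
  assert (Hdelta : 0 < Rmin d (Rmin x (1 - x))).
  { pose proof (cond_pos d). repeat apply Rmin_glb_lt; lra. }
  exists (mkposreal _ Hdelta). intros t Ht0 Ht. simpl in Ht.
  pose proof (Rmin_l d (Rmin x (1 - x))). pose proof (Rmin_r d (Rmin x (1 - x))).
  pose proof (Rmin_l x (1 - x)). pose proof (Rmin_r x (1 - x)).
  apply Rabs_def2 in Ht as [Ht1 Ht2].
  specialize (Hd (x + t)).
  replace (x + t - x) with t in Hd by ring. apply Hd.
  - change (Rabs (x + t - x) < d). replace (x + t - x) with t by ring.
    apply Rabs_def1; lra.
  - split; [unfold I01; lra | lra].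
Qed.

Lemma has_deriv01_cont (F dF : R -> R) : has_deriv01 F dF -> cont01 F.
Proof.
  intros HF x Ix. apply filterlim_locally. intros eps. unfold within.
  set (K := Rabs (dF x) + 1).
  assert (HK : 0 < K) by (unfold K; pose proof (Rabs_pos (dF x)); lra).
  assert (Hr : 0 < eps / K) by (apply Rdiv_lt_0_compat; [apply cond_pos | lra]).
  pose proof (proj1 (filterlim_locally _ _) (HF x Ix) (mkposreal 1 Rlt_0_1)) as Hquot.
  unfold within in Hquot.
  generalize (filter_and _ _ Hquot
    (locally_ball x (mkposreal _ Hr))).
  apply filter_imp. intros y [Hq Hy] Iy. change (Rabs (F y - F x) < eps).
  change (Rabs (y - x) < eps / K) in Hy.
  destruct (Req_dec y x) as [->|Hyx].
  - rewrite Rminus_diag, Rabs_R0. apply cond_pos.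
  - specialize (Hq (conj Iy Hyx)). change (Rabs ((F y - F x) / (y - x) - dF x) < 1) in Hq.
    set (q := (F y - F x) / (y - x)) in Hq.
    assert (Hslope : Rabs q <= K).
    { unfold K. pose proof (Rabs_triang_inv q (dF x)). lra. }
    replace (F y - F x) with (q * (y - x)) by (unfold q; field; lra).
    rewrite Rabs_mult.
    apply Rle_lt_trans with (K * Rabs (y - x)).
    + apply Rmult_le_compat_r; [apply Rabs_pos | exact Hslope].
    + replace (pos eps) with (K * (eps / K)) by (field; lra).
      apply Rmult_lt_compat_l; lra.
Qed.

Lemma derive_pos_increase (F : R -> R) (x l b : R) :
  is_derive F x l -> 0 < l -> x < b -> exists y, x < y <= b /\ F x < F y.
Proof.
  intros HF Hl Hb. apply is_derive_Reals in HF.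
  destruct (HF l Hl) as [d Hd]. pose proof (cond_pos d).
  set (t := Rmin (d / 2) (b - x)).
  assert (Ht : 0 < t) by (apply Rmin_glb_lt; lra).
  assert (Htd : t <= d / 2) by apply Rmin_l.
  assert (Htb : t <= b - x) by apply Rmin_r.
  assert (Hquot : 0 < (F (x + t) - F x) / t).
  { assert (Hclose : Rabs ((F (x + t) - F x) / t - l) < l).
    { apply Hd; [apply Rgt_not_eq; lra | rewrite Rabs_right by lra; lra]. }
    apply Rabs_def2 in Hclose. lra. }
  exists (x + t). split; [lra |].
  assert (0 < (F (x + t) - F x) / t * t) by (apply Rmult_lt_0_compat; lra).
  replace ((F (x + t) - F x) / t * t) with (F (x + t) - F x) in * by (field; lra).
  lra.
Qed.

Definition clamp (a t : R) : R := Rmax a (Rmin t 1).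

Lemma clamp_range (a t : R) : a <= 1 -> a <= clamp a t <= 1.
Proof. intros Ha. unfold clamp, Rmax, Rmin. repeat destruct Rle_dec; lra. Qed.

Lemma clamp_id (a t : R) : a <= t <= 1 -> clamp a t = t.
Proof. intros Ht. unfold clamp, Rmax, Rmin. repeat destruct Rle_dec; lra. Qed.

Lemma clamp_lipschitz (a t s : R) :
  a <= 1 -> Rabs (clamp a t - clamp a s) <= Rabs (t - s).
Proof.
  intros Ha. unfold clamp, Rmax, Rmin.
  repeat destruct Rle_dec; unfold Rabs; repeat destruct Rcase_abs; lra.
Qed.

(* Extreme value theorem on [a,1] for functions continuous on [0,1]:
   apply the classical one to [F o clamp a], which is continuous everywhere. *)
Lemma cont01_max_on (F : R -> R) (a : R) :
  cont01 F -> 0 <= a <= 1 ->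
  exists m, a <= m <= 1 /\ forall x, a <= x <= 1 -> F x <= F m.
Proof.
  intros HF Ha.
  assert (Hcont : forall t, continuity_pt (fun s => F (clamp a s)) t).
  { intros t. apply continuity_pt_filterlim, filterlim_locally. intros eps.
    pose proof (clamp_range a t ltac:(lra)) as Ht.
    assert (It : I01 (clamp a t)) by (unfold I01; lra).
    destruct (proj1 (filterlim_locally _ _) (HF _ It) eps) as [d Hd].
    exists d. intros s Hs. apply Hd.
    - change (Rabs (clamp a s - clamp a t) < d).
      eapply Rle_lt_trans; [apply clamp_lipschitz; lra | exact Hs].
    - pose proof (clamp_range a s ltac:(lra)). unfold I01; lra. }
  destruct (continuity_ab_maj _ a 1 (proj2 Ha) (fun t _ => Hcont t)) as [m [Hmax Hm]].
  exists m. split; [exact Hm |].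
  intros x Hx. specialize (Hmax x Hx). simpl in Hmax.
  rewrite (clamp_id a x Hx), (clamp_id a m Hm) in Hmax. exact Hmax.
Qed.

(* Otherwise a maximum of [F] over [x1,1] would be a nonnegative point < 1 at
   which [F] still increases. *)
Lemma barrier (F dF : R -> R) (a : R) :
  0 <= a < 1 -> cont01 F -> F 1 <= 0 ->
  (forall x, a < x < 1 -> is_derive F x (dF x)) ->
  (forall x, a < x < 1 -> 0 <= F x -> 0 < dF x) ->
  forall x1, a < x1 < 1 -> F x1 < 0.
Proof.
  intros Ha HF H1 Hder Hpos x1 Hx1.
  apply Rnot_le_lt. intros Hx1nn.
  destruct (cont01_max_on F x1 HF ltac:(lra)) as [m [Hm Hmax]].
  assert (Hp : exists p, x1 <= p < 1 /\ 0 <= F p /\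
             forall x, x1 <= x <= 1 -> F x <= F p).
  { destruct (Req_dec m 1) as [->|Hm1].
    - exists x1. repeat split; try lra.
      intros x Hx. pose proof (Hmax x Hx). lra.
    - exists m. repeat split; try lra; auto.
      specialize (Hmax x1 ltac:(lra)). lra. }
  destruct Hp as [p [Hp [Hp0 Hpmax]]].
  destruct (derive_pos_increase F p (dF p) 1 (Hder p ltac:(lra))
              (Hpos p ltac:(lra) Hp0) ltac:(lra)) as [y [Hy Hincr]].
  specialize (Hpmax y ltac:(lra)). lra.
Qed.

Lemma barrier_at_left1 (F dF : R -> R) :
  cont01 F -> F 1 <= 0 ->
  at_left 1 (fun x => is_derive F x (dF x) /\ (0 <= F x -> 0 < dF x)) ->
  at_left 1 (fun x => F x < 0).
Proof.
  intros HF H1 Hev.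
  destruct (at_left1_interval _ Hev) as [a [Ha Hint]].
  assert (Hneg := barrier F dF a Ha HF H1
    (fun x Hx => proj1 (Hint x Hx)) (fun x Hx => proj2 (Hint x Hx))).
  assert (Hr : 0 < 1 - a) by lra.
  exists (mkposreal _ Hr). intros x Hx Hlt. apply Hneg. split; [|lra].
  change (Rabs (x - 1) < 1 - a) in Hx. rewrite Rabs_left in Hx by lra. lra.
Qed.

Definition neg_sign_change (p : R -> R) (T : R) : Prop :=
  T <= 0 /\ (forall t, t < T -> 0 < p t) /\ (forall t, T < t < 0 -> p t < 0).

Lemma quadratic_sign_change (A B C : R) :
  0 < A -> C < 0 ->
  neg_sign_change (fun t => A * t ^ 2 - B * t + C)
                  ((B - sqrt (B ^ 2 - 4 * C * A)) / (2 * A)).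
Proof.
  intros HA HC.
  set (r := sqrt (B ^ 2 - 4 * C * A)).
  assert (Hr2 : r * r = B ^ 2 - 4 * C * A) by (apply sqrt_sqrt; nra).
  assert (Hr0 : 0 <= r) by apply sqrt_pos.
  assert (HrB : B < r /\ - B < r) by (split; nra).
  set (T := (B - r) / (2 * A)). set (T2 := (B + r) / (2 * A)).
  assert (HT : T < 0) by (apply Rdiv_neg_pos; lra).
  assert (HT2 : 0 < T2) by (apply Rdiv_lt_0_compat; lra).
  assert (Hfact : forall t, A * t ^ 2 - B * t + C = A * (t - T) * (t - T2)).
  { intros t. unfold T, T2.
    replace C with ((B * B - r * r) / (4 * A)) at 1 by (rewrite Hr2; field; lra).
    field. lra. }
  split; [lra | split]; intros t Ht; rewrite Hfact.
  - assert (0 < A * (T - t)) by (apply Rmult_lt_0_compat; lra). nra.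
  - assert (0 < A * (t - T)) by (apply Rmult_lt_0_compat; lra). nra.
Qed.

Lemma degenerate_quadratic_sign_change (A B : R) :
  0 < A -> neg_sign_change (fun t => A * t ^ 2 - B * t + 0) (Rmin 0 (B / A)).
Proof.
  intros HA.
  assert (HAT : A * (B / A) = B) by (field; lra).
  pose proof (Rmin_l 0 (B / A)). pose proof (Rmin_r 0 (B / A)).
  split; [lra | split]; intros t Ht.
  - assert (A * t < B) by (rewrite <- HAT; apply Rmult_lt_compat_l; lra). nra.
  - assert (HT : Rmin 0 (B / A) = B / A).
    { unfold Rmin in *. destruct Rle_dec; lra. }
    rewrite HT in Ht.
    assert (B < A * t) by (rewrite <- HAT; apply Rmult_lt_compat_l; lra). nra.
Qed.

Section RatioAtOne.

Variables (h D dD g : R -> R) (c : R) (z : R -> R).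
Hypotheses (Hh : cont01 h) (Hg : cont01 g) (HD : C1_01 D dD)
  (gpos : forall x, 0 < x <= 1 -> 0 < g x)
  (Dpos : forall x, 0 < x < 1 -> 0 < D x)
  (Hz : solves_Pc h D g c z) (D1 : D 1 = 0) (z1 : z 1 = 0).

(* The characteristic polynomial of the equation for [w = D / z]: at a point
   where [w = t], the derivative of [D - t z] equals [charP x t] plus a term of
   the sign of [t - w]. *)
Definition charP (x t : R) : R := g x * t ^ 2 - (h x - c) * t + dD x.

Lemma charP_cont01 (s t : R) : cont01 (fun x => s * charP x t).
Proof.
  destruct HD as [_ HdD].
  apply (cont01_ext (fun x => (s * t ^ 2) * g x + ((- s * t) * h x
                              + (s * dD x + s * t * c)))).
  { intros x. unfold charP. ring. }
  apply cont01_plus; [now apply cont01_scal |].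
  apply cont01_plus; [now apply cont01_scal |].
  apply cont01_plus; [now apply cont01_scal | apply cont01_const].
Qed.

(* Barrier argument applied to
   [F = s (D - t z)], whose derivative is [s charP + g t s (D/z - t)]. *)
Lemma ratio_side (s t : R) :
  t < 0 -> 0 < s * charP 1 t -> at_left 1 (fun x => 0 < s * (D x / z x - t)).
Proof.
  intros Ht Hs.
  destruct HD as [HdD _]. destruct Hz as [Hzc [Hzd [Hzneg _]]].
  set (F := fun x => s * (D x - t * z x)).
  set (dF := fun x => s * (dD x - t * (h x - c - D x * g x / z x))).
  assert (HF : cont01 F).
  { apply (cont01_ext (fun x => s * D x + (- s * t) * z x)).
    { intros x. unfold F. ring. }
    apply cont01_plus; apply cont01_scal; [exact (has_deriv01_cont _ _ HdD) | exact Hzc]. }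
  assert (HF1 : F 1 <= 0) by (unfold F; rewrite D1, z1; lra).
  assert (Hneg : at_left 1 (fun x => F x < 0)).
  { apply (barrier_at_left1 F dF HF HF1).
    generalize (filter_and _ _ at_left1_open_unit
                  (cont01_eventually_pos _ (charP_cont01 s t) Hs)).
    apply filter_imp. intros x [Hx Hpos]. split.
    - apply is_derive_scal.
      apply (is_derive_minus D (fun y => t * z y)).
      + exact (has_deriv01_interior D dD x HdD Hx).
      + apply is_derive_scal, Hzd, Hx.
    - intros HFx. pose proof (Hzneg x Hx). pose proof (gpos x ltac:(lra)).
      set (w := D x / z x) in *.
      assert (HDw : D x = w * z x) by (unfold w; field; lra).
      assert (Hslope : dF x = s * charP x t + g x * t * (s * (w - t))).
      { unfold dF, charP. rewrite HDw. field. lra. }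
      assert (Hsw : s * (w - t) <= 0).
      { unfold F in HFx. rewrite HDw in HFx. nra. }
      assert (g x * t < 0) by nra.
      nra. }
  generalize (filter_and _ _ at_left1_open_unit Hneg).
  apply filter_imp. intros x [Hx HFx]. pose proof (Hzneg x Hx).
  unfold F in HFx.
  replace (D x) with (D x / z x * z x) in HFx by (field; lra).
  nra.
Qed.

(* If [T] is the sign change of [charP 1] on the negative axis, then [D / z]
   tends to [T] at [1]: the lower bound comes from [ratio_side] with [s = 1];
   the upper bound from [s = -1] when [T < 0], and from [D > 0 > z] when [T = 0]. *)
Lemma ratio_limit (T : R) :
  neg_sign_change (charP 1) T ->
  filterlim (fun x => D x / z x) (at_left 1) (locally T).
Proof.
  intros [HT [Hleft Hright]]. apply filterlim_locally. intros eps.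
  pose proof (cond_pos eps) as Heps.
  assert (Hlow : at_left 1 (fun x => T - eps / 2 < D x / z x)).
  { generalize (ratio_side 1 (T - eps / 2) ltac:(lra)
                  ltac:(rewrite Rmult_1_l; apply Hleft; lra)).
    apply filter_imp. intros x Hx. lra. }
  assert (Hup : at_left 1 (fun x => D x / z x < T + eps / 2)).
  { destruct (Rle_lt_or_eq_dec _ _ HT) as [HTneg | ->].
    - set (t := T + Rmin (eps / 2) (- T / 2)).
      assert (Hm1 : Rmin (eps / 2) (- T / 2) <= eps / 2) by apply Rmin_l.
      assert (Hm2 : Rmin (eps / 2) (- T / 2) <= - T / 2) by apply Rmin_r.
      assert (Hm0 : 0 < Rmin (eps / 2) (- T / 2)) by (apply Rmin_glb_lt; lra).
      assert (Hct : charP 1 t < 0) by (apply Hright; unfold t; lra).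
      generalize (ratio_side (-1) t ltac:(unfold t; lra) ltac:(lra)).
      apply filter_imp. intros x Hx. unfold t in Hx. lra.
    - destruct Hz as [_ [_ [Hzneg _]]].
      apply (filter_imp (fun x => 0 < x < 1)); [| exact at_left1_open_unit].
      intros x Hx. pose proof (Hzneg x Hx). pose proof (Dpos x Hx).
      assert (D x / z x < 0).
      { unfold Rdiv. apply Rmult_pos_neg; [lra | apply Rinv_lt_0_compat; lra]. }
      lra. }
  generalize (filter_and _ _ Hlow Hup). apply filter_imp. intros x [H1 H2].
  change (Rabs (D x / z x - T) < eps). apply Rabs_def1; lra.
Qed.

End RatioAtOne.

Theorem lemma9p1 (f h D dD g : R -> R) (c : R) (z : R -> R) :
  C1_01 f h -> f 0 = 0 ->
  C1_01 D dD -> (forall x, 0 < x < 1 -> 0 < D x) -> D 1 = 0 ->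
  cont01 g -> (forall x, 0 < x <= 1 -> 0 < g x) -> g 0 = 0 ->
  (exists M delta, 0 < delta /\
     forall x, 0 < x < delta -> D x * g x / x <= M) ->
  solves_Pc h D g c z -> z 1 = 0 ->
  (dD 1 < 0 ->
     filterlim (fun x => D x / z x) (at_left 1)
       (locally ((h 1 - c - sqrt ((h 1 - c) ^ 2 - 4 * dD 1 * g 1)) / (2 * g 1))))
  /\
  (dD 1 = 0 ->
     filterlim (fun x => D x / z x) (at_left 1)
       (locally (Rmin 0 ((h 1 - c) / g 1)))).
Proof.
  intros [_ Hh] _ HD Dpos D1 Hg gpos _ _ Hz z1.
  assert (Hg1 : 0 < g 1) by (apply gpos; lra).
  split; intros HdD1; apply (ratio_limit h D dD g c z Hh Hg HD gpos Dpos Hz D1 z1).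
  - exact (quadratic_sign_change (g 1) (h 1 - c) (dD 1) Hg1 HdD1).
  - unfold charP. rewrite HdD1.
    exact (degenerate_quadratic_sign_change (g 1) (h 1 - c) Hg1).
Qed.
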